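(* Let $0\le r\le n$, let $A\in\mathcal{A}_{n+1,r+1}$ have block-ends $b_1>\dots>b_{r+1}$, and fix a tiling of $\Gamma(X(A))$. If $x=b_i$ with $i<r+1$, then at the termination of the fusion-exchange algorithm applied to $A$, the northwest boundary edge of the $x$-strip carries a nonempty label.
   Context: Words and diagrams. For $0\le r\le n$ let $B_n^r$ be the set of words $X\in\{H,L,0\}^n$ with exactly $r$ letters $L$. If $X$ has $k$ letters $H$, $r$ letters $L$ and $\ell$ letters $0$, its rhombic diagram $\Gamma(X)$ is the closed region bounded by two paths of unit steps, using the directions west (horizontal), south (vertical) and southwest (diagonal: a fixed unit vector strictly between west and south), both going from a point $P$ to a point $Q$: the northwest boundary consists of $\ell$ west steps, then $r$ southwest steps, then $k$ south steps; the southeast boundary is obtained by reading $X$ left to right and taking a west step for each $0$, a southwest step for each $L$, a south step for each $H$. A tiling of $\Gamma(X)$ is a tiling by unit rhombi of three kinds: squares (horizontal and vertical edges), tall rhombi (vertical and diagonal edges), short rhombi (horizontal and diagonal edges). A west-strip (resp. north-strip, northwest-strip) is a maximal set of tiles connected through shared vertical (resp. horizontal, diagonal) edges; each runs from an edge of the southeast boundary to an edge of the northwest boundary. Each tile has two edges on its lower-right side: its east edge (vertical for squares and tall rhombi, diagonal for short rhombi) and its south edge (horizontal for squares and short rhombi, diagonal for tall rhombi); the parallel edges on its upper-left side are its west and north edges. Assemblées. An assemblée of size $(m,s)$ is a collection of $s$ nonempty, pairwise disjoint, linearly ordered sets (blocks) with union $\{1,\dots,m\}$; the last element of a block is its block-end.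 Blocks are listed in the canonical order with decreasing block-ends, and the assemblée is identified with the concatenated word. $\mathcal{A}_{m,s}$ is the set of these. For $A\in\mathcal{A}_{n+1,r+1}$ with block-ends $b_1>\dots>b_{r+1}$, a non-block-end element $x$ is an increase if $x+1$ appears to the right of $x$ in $A$, and a decrease otherwise (so $n+1$, if not a block-end, is a decrease). $X(A)\in B_n^r$ is obtained from $A$ by deleting its last letter $b_{r+1}$ and replacing each increase by $H$, each decrease by $0$ and each remaining block-end by $L$. Fusion-exchange algorithm. A label is a finite, possibly empty, set of consecutive integers; for labels $E,S$ write $E\succ S$ if both are nonempty and $\min E=\max S+1$. Given $A\in\mathcal{A}_{n+1,r+1}$ and a tiling of $\Gamma(X(A))$: initially the southeast boundary edges, in order from $P$ to $Q$, receive the singleton labels of the letters of $A$ from left to right, $b_{r+1}$ omitted. Step: choose a tile whose east and south edges are labeled, say by $E$ and $S$, and whose west and north edges are not. (R I) If $E\succ S$ and the south edge is horizontal: west edge gets $E\cup S$, north edge gets $\emptyset$, place $\alpha$ in the tile. (R II) If $S\succ E$ and the east edge is vertical: north edge gets $E\cup S$, west edge gets $\emptyset$, place $\beta$. (R III) Otherwise: west edge gets $E$, north edge gets $S$, and place $q$ if $E\ne\emptyset$ and $S\ne\emptyset$. Repeat until every edge is labeled (termination). For a letter $x\neq b_{r+1}$ of $A$, the $x$-strip is the strip containing the southeast boundary edge initially labeled $\{x\}$. *)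

From mathcomp Require Import all_boot.
Set Implicit Arguments. Unset Strict Implicit. Unset Printing Implicit Defensive.

Inductive letter := LH | LL | L0.

(* Order used to sort the southeast boundary into the northwest boundary
   0^l L^r H^k :  0 < L < H. *)
Definition lrank (c : letter) : nat :=
  match c with L0 => 0 | LL => 1 | LH => 2 end.

(* An assemblee of size (m,s), given as its list of blocks in canonical order
   (each block a linearly ordered list); the assemblee as a word is [flatten A]. *)
Definition assemblee (m s : nat) (A : seq (seq nat)) : Prop :=
  [/\ size A = s,
      all (fun B => B != [::]) A,
      perm_eq (flatten A) (iota 1 m)
    & sorted (fun a b => b < a) (map (last 0) A)].

Definition aword (A : seq (seq nat)) : seq nat := flatten A.

(* block-ends b_1 > ... > b_{s} (0-indexed list) *)
Definition block_ends (A : seq (seq nat)) : seq nat := map (last 0) A.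

(* X(A): delete the last letter, then block-end -> L, increase -> H,
   decrease -> 0. *)
Definition X_of (A : seq (seq nat)) : seq letter :=
  let w := aword A in
  map (fun x => if x \in block_ends A then LL
                else if x.+1 \in drop (index x w).+1 w then LH else L0)
      (take (size w).-1 w).

(* Labels: finite sets of consecutive integers, represented as lists
   (union = concatenation). *)
Definition label := seq nat.
Definition lmax (S : label) : nat := \max_(i <- S) i.
Definition lmin (E : label) : nat := foldr minn (head 0 E) E.
Definition lsucc (E S : label) : bool :=
  [&& E != [::], S != [::] & lmin E == (lmax S).+1].

(* Current path from P to Q: list of (direction letter, label) for its edges.
   A tile whose lower-right side occupies positions i (east edge) and i+1
   (south edge) is replaced by its upper-left side: position i becomes the
   north edge (direction of the south edge) and i+1 the west edge
   (direction of the east edge). Horizontal = 0, vertical = H. *)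
Definition edge := (letter * label)%type.
Definition dedge : edge := (L0, [::]).

Definition tile_out (e : letter) (E : label) (s : letter) (S : label)
  : edge * edge :=
  if lsucc E S && (if s is L0 then true else false)
  then ((s, [::]), (e, E ++ S))
  else if lsucc S E && (if e is LH then true else false)
  then ((s, E ++ S), (e, [::]))
  else ((s, S), (e, E)).

Definition step (st : seq edge) (i : nat) : seq edge :=
  let: (e, E) := nth dedge st i in
  let: (s, S0) := nth dedge st i.+1 in
  let: (nw, wt) := tile_out e E s S0 in
  set_nth dedge (set_nth dedge st i nw) i.+1 wt.

(* A tile can be placed at i iff the two edges form an inversion
   (H0 -> square, HL -> tall rhombus, L0 -> short rhombus). *)
Definition valid_step (st : seq edge) (i : nat) : bool :=
  (i.+1 < size st) && (lrank (nth dedge st i.+1).1 < lrank (nth dedge st i).1).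

Fixpoint run (st : seq edge) (sigma : seq nat) : seq edge :=
  if sigma is i :: s then run (step st i) s else st.

Fixpoint valid_run (st : seq edge) (sigma : seq nat) : bool :=
  if sigma is i :: s then valid_step st i && valid_run (step st i) s else true.

(* Position of the edge of a strip along the path: a tile at i moves the
   east edge (position i) to the west edge (position i+1) and the south
   edge (i+1) to the north edge (i). *)
Fixpoint track (p : nat) (sigma : seq nat) : nat :=
  if sigma is i :: s then
    track (if p == i then i.+1 else if p == i.+1 then i else p) s
  else p.

Definition init (A : seq (seq nat)) : seq edge :=
  let w := aword A in
  zip (X_of A) (map (fun a => [:: a]) (take (size w).-1 w)).

Definition is_nw_boundary (st : seq edge) : bool :=
  sorted (fun a b => lrank a <= lrank b) (map fst st).

From mathcomp Require Import all_boot.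
Set Implicit Arguments. Unset Strict Implicit. Unset Printing Implicit Defensive.

(* Rules R I, R II and R III never empty the label of a diagonal edge: a
   diagonal east edge faces a horizontal south edge and passes on E or E ∪ S
   to the west edge, and a diagonal south edge faces a vertical east edge and
   passes on S or E ∪ S to the north edge.  So the diagonal strip of a
   block-end x keeps a nonempty label from its southeast edge, labeled {x}, to
   its northwest edge.  The southeast edge exists because x is not b_{r+1},
   the last letter of the word of A. *)

Definition nonempty_diagonal (d : edge) : bool :=
  if d.1 is LL then d.2 != [::] else false.

Definition track_step (p i : nat) : nat :=
  if p == i then i.+1 else if p == i.+1 then i else p.

Lemma tile_out_diag_east (e s : letter) (E S : label) :
  nonempty_diagonal (e, E) -> lrank s < lrank e ->
  nonempty_diagonal (tile_out e E s S).2.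
Proof.
case: e => //= E_ne; case: s => // _; rewrite /tile_out /= andbF andbT.
by case: ifP => _ //=; case: E E_ne.
Qed.

Lemma tile_out_diag_south (e s : letter) (E S : label) :
  nonempty_diagonal (s, S) -> lrank s < lrank e ->
  nonempty_diagonal (tile_out e E s S).1.
Proof.
case: s => //= S_ne; case: e => // _; rewrite /tile_out /= andbF andbT.
by case: ifP => _ //=; case: E.
Qed.

Section Step.

Variables (st : seq edge) (i : nat).
Hypothesis lt_i1_size : i.+1 < size st.

Let tile := tile_out (nth dedge st i).1 (nth dedge st i).2
                     (nth dedge st i.+1).1 (nth dedge st i.+1).2.

Lemma size_step : size (step st i) = size st.
Proof.
rewrite /step; case: (nth dedge st i) => e E; case: (nth dedge st i.+1) => s S.
case: (tile_out e E s S) => a b.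
by rewrite !size_set_nth (maxn_idPr (ltnW lt_i1_size)) (maxn_idPr lt_i1_size).
Qed.

Lemma nth_step (p : nat) :
  nth dedge (step st i) p =
  if p == i.+1 then tile.2 else if p == i then tile.1 else nth dedge st p.
Proof.
rewrite /step /tile.
case: (nth dedge st i) => e E; case: (nth dedge st i.+1) => s S /=.
case: (tile_out e E s S) => a b /=.
rewrite nth_set_nth /=; case: eqP => // _; exact: nth_set_nth.
Qed.

End Step.

Lemma step_nonempty_diagonal (st : seq edge) (i p : nat) :
  valid_step st i -> p < size st -> nonempty_diagonal (nth dedge st p) ->
  track_step p i < size (step st i) /\
  nonempty_diagonal (nth dedge (step st i) (track_step p i)).
Proof.
case/andP=> lt_i1 lt_rank; rewrite size_step // nth_step // /track_step.
case: (eqVneq p i) => [-> _ diag_i|ne_pi lt_p].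
  rewrite eqxx; split=> //; move: diag_i lt_rank.
  case: (nth dedge st i) => e E; exact: tile_out_diag_east.
case: (eqVneq p i.+1) => [-> diag_i1|ne_pi1 diag_p].
  rewrite (ltn_eqF (ltnSn i)) eqxx; split; first exact: ltnW.
  move: diag_i1 lt_rank; case: (nth dedge st i.+1) => s S; exact: tile_out_diag_south.
by rewrite (negbTE ne_pi1) (negbTE ne_pi).
Qed.

Lemma run_nonempty_diagonal (sigma : seq nat) (st : seq edge) (p : nat) :
  valid_run st sigma -> p < size st -> nonempty_diagonal (nth dedge st p) ->
  nonempty_diagonal (nth dedge (run st sigma) (track p sigma)).
Proof.
elim: sigma st p => [|i sigma IH] st p //= /andP[valid_i valid_sigma] lt_p diag_p.
have [lt_p' diag_p'] := step_nonempty_diagonal valid_i lt_p diag_p.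
exact: IH.
Qed.

Lemma size_X_of (A : seq (seq nat)) : size (X_of A) = (size (aword A)).-1.
Proof. by rewrite size_map size_takel ?leq_pred. Qed.

Lemma size_init (A : seq (seq nat)) : size (init A) = (size (aword A)).-1.
Proof. by rewrite size_zip size_X_of size_map size_takel ?leq_pred ?minnn. Qed.

Lemma nth_init (A : seq (seq nat)) (p : nat) :
  p < (size (aword A)).-1 ->
  nth dedge (init A) p = (nth L0 (X_of A) p, [:: nth 0 (aword A) p]).
Proof.
move=> lt_p; rewrite nth_zip ?size_X_of ?size_map ?size_takel ?leq_pred //.
by rewrite (nth_map 0 ([::] : label)) ?size_takel ?leq_pred // nth_take.
Qed.

Lemma X_of_block_end (A : seq (seq nat)) (x : nat) :
  x \in block_ends A -> index x (aword A) < (size (aword A)).-1 ->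
  nth L0 (X_of A) (index x (aword A)) = LL.
Proof.
move=> be_x lt_x.
have x_w : x \in aword A by rewrite -index_mem (leq_trans lt_x) ?leq_pred.
by rewrite (nth_map 0) ?size_takel ?leq_pred // nth_take // nth_index // be_x.
Qed.

Lemma index_lt_size_pred (T : eqType) (x0 x : T) (w : seq T) :
  x \in w -> x != last x0 w -> index x w < (size w).-1.
Proof.
case/lastP: w => [//|w y]; rewrite mem_rcons in_cons last_rcons size_rcons /=.
case/orP=> [/eqP ->|x_w]; first by rewrite eqxx.
by rewrite -cats1 index_cat x_w index_mem.
Qed.

Section Assemblee.

Variables (m s : nat) (A : seq (seq nat)).
Hypothesis A_assemblee : assemblee m s A.

Lemma size_block_ends : size (block_ends A) = s.
Proof. by case: A_assemblee => size_A *; rewrite size_map. Qed.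

Lemma uniq_block_ends : uniq (block_ends A).
Proof.
case: A_assemblee => _ _ _ sorted_A.
apply: (sorted_uniq (leT := fun a b => b < a)) sorted_A => [a b c ba cb|a].
  exact: ltn_trans cb ba.
exact: ltnn.
Qed.

Lemma last_aword : last 0 (aword A) = last 0 (block_ends A).
Proof.
case: A_assemblee => _; case/lastP: A => [//|A' B].
rewrite /aword /block_ends flatten_rcons map_rcons last_rcons last_cat all_rcons.
by case: B.
Qed.

Lemma block_end_in_aword (x : nat) : x \in block_ends A -> x \in aword A.
Proof.
case: A_assemblee => _ /allP ne_A _ _ /mapP[B B_A ->].
apply/flattenP; exists B => //.
by case: B B_A => [/ne_A|b B _] //; apply: mem_last.
Qed.

Lemma nth_block_end_neq_last (i : nat) :
  i < s.-1 -> nth 0 (block_ends A) i != last 0 (aword A).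
Proof.
move=> lt_i; have lt_i_s : i < s by apply: leq_trans lt_i (leq_pred s).
rewrite last_aword -nth_last size_block_ends.
rewrite nth_uniq ?uniq_block_ends ?size_block_ends ?neq_ltn ?lt_i //.
by case: s lt_i_s.
Qed.

End Assemblee.

Theorem lemma3p6 (n r : nat) (A : seq (seq nat)) (sigma : seq nat) (i : nat) :
  r <= n ->
  assemblee n.+1 r.+1 A ->
  valid_run (init A) sigma ->
  is_nw_boundary (run (init A) sigma) ->
  i < r ->
  let x := nth 0 (block_ends A) i in
  (nth dedge (run (init A) sigma) (track (index x (aword A)) sigma)).2 != [::].
Proof.
move=> _ A_assemblee valid_sigma _ lt_ir /=; set x := nth 0 (block_ends A) i.
have be_x : x \in block_ends A.
  by rewrite mem_nth // (size_block_ends A_assemblee) ltnW.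
have lt_x : index x (aword A) < (size (aword A)).-1.
  exact: index_lt_size_pred (block_end_in_aword A_assemblee be_x)
                            (nth_block_end_neq_last A_assemblee lt_ir).
have diag_x : nonempty_diagonal (nth dedge (init A) (index x (aword A))).
  by rewrite nth_init // /nonempty_diagonal /= X_of_block_end.
have := run_nonempty_diagonal valid_sigma _ diag_x; rewrite size_init => /(_ lt_x).
by case: (nth dedge _ _) => [[] E].
Qed.
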